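(* Let $X$ be a proper geodesic metric space, $x_0\in X$ a basepoint, and $g:X\to X$ a Morse isometry. Then there exists a Morse bi-infinite geodesic $\gamma$ such that $\gamma(\infty)$ and $\gamma(-\infty)$ are two distinct points of $\partial_M X$ fixed by $g$.
   Context: A Morse gauge is a function $N:[1,\infty)\times[0,\infty)\to[0,\infty)$; a (quasi-)geodesic $\gamma$ is $N$-Morse if every $(\lambda,\epsilon)$-quasi-geodesic with endpoints on $\gamma$ lies in the $N(\lambda,\epsilon)$-neighborhood of $\gamma$; Morse means $N$-Morse for some $N$. $\partial_M X$ is the set of Morse geodesic rays modulo finite Hausdorff distance, isometries acting by $[\alpha]\mapsto[g\circ\alpha]$; for a bi-infinite geodesic $\gamma$, $\gamma(\pm\infty)$ denote the classes of its two ends. With $x_n=g^n(x_0)$, an isometry $g$ is Morse if there are a Morse gauge $N$ and geodesics $[x_i,x_{i+1}]$ ($i\in\mathbb{Z}$) whose bi-infinite concatenation is an $N$-Morse quasi-geodesic. *)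

From Stdlib Require Import Reals ZArith List.
Open Scope R_scope.

Set Implicit Arguments.
Section MetricDefs.
Variables (X : Type) (d : X -> X -> R).

Definition is_metric : Prop :=
  (forall x y, 0 <= d x y) /\ (forall x y, d x y = 0 <-> x = y) /\
  (forall x y, d x y = d y x) /\ (forall x y z, d x z <= d x y + d y z).

Definition open_set (U : X -> Prop) : Prop :=
  forall x, U x -> exists e, 0 < e /\ forall y, d x y < e -> U y.

Definition compact_set (K : X -> Prop) : Prop :=
  forall (I : Type) (U : I -> X -> Prop),
    (forall i, open_set (U i)) -> (forall x, K x -> exists i, U i x) ->
    exists l : list I, forall x, K x -> exists i, In i l /\ U i x.

Definition proper_space : Prop :=
  forall x r, compact_set (fun y => d x y <= r).

Definition geodesic_on (D : R -> Prop) (c : R -> X) : Prop :=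
  forall s t, D s -> D t -> d (c s) (c t) = Rabs (s - t).

Definition geodesic_space : Prop :=
  forall x y, exists c : R -> X,
    geodesic_on (fun t => 0 <= t <= d x y) c /\ c 0 = x /\ c (d x y) = y.

(** (lam, eps)-quasi-geodesic on the domain D (no continuity required) *)
Definition quasi_geodesic_on (lam eps : R) (D : R -> Prop) (c : R -> X) : Prop :=
  forall s t, D s -> D t ->
    (1 / lam) * Rabs (s - t) - eps <= d (c s) (c t) /\
    d (c s) (c t) <= lam * Rabs (s - t) + eps.

Definition is_quasi_geodesic (D : R -> Prop) (c : R -> X) : Prop :=
  exists lam eps, 1 <= lam /\ 0 <= eps /\ quasi_geodesic_on lam eps D c.

Definition morse_gauge (N : R -> R -> R) : Prop :=
  forall lam eps, 1 <= lam -> 0 <= eps -> 0 <= N lam eps.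

Definition N_morse (N : R -> R -> R) (D : R -> Prop) (gamma : R -> X) : Prop :=
  forall lam eps a b (c : R -> X), 1 <= lam -> 0 <= eps -> a <= b ->
    quasi_geodesic_on lam eps (fun t => a <= t <= b) c ->
    (exists s, D s /\ c a = gamma s) -> (exists s, D s /\ c b = gamma s) ->
    forall t, a <= t <= b -> exists s, D s /\ d (c t) (gamma s) <= N lam eps.

Definition is_morse (D : R -> Prop) (gamma : R -> X) : Prop :=
  exists N, morse_gauge N /\ N_morse N D gamma.

Definition ray_dom (t : R) : Prop := 0 <= t.
Definition line_dom (t : R) : Prop := True.

(** Morse geodesic ray [0,oo) -> X (a representative of a point of the
    Morse boundary) *)
Definition morse_geodesic_ray (c : R -> X) : Prop :=
  geodesic_on ray_dom c /\ is_morse ray_dom c.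

Definition finite_hausdorff (D1 : R -> Prop) (c1 : R -> X)
    (D2 : R -> Prop) (c2 : R -> X) : Prop :=
  exists K, (forall s, D1 s -> exists t, D2 t /\ d (c1 s) (c2 t) <= K) /\
            (forall t, D2 t -> exists s, D1 s /\ d (c1 s) (c2 t) <= K).

(** equality of points of the Morse boundary, represented by rays *)
Definition same_boundary_point (a b : R -> X) : Prop :=
  finite_hausdorff ray_dom a ray_dom b.

(** the two ends of a bi-infinite path, as rays *)
Definition pos_end (gamma : R -> X) : R -> X := fun t => gamma t.
Definition neg_end (gamma : R -> X) : R -> X := fun t => gamma (- t).

Definition isometry (g : X -> X) : Prop :=
  (forall x y, d (g x) (g y) = d x y) /\ (forall y, exists x, g x = y).

(** Morse isometry: with x_n = g^n(x0) (n in Z), there are geodesics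
    [x_i, x_{i+1}] whose bi-infinite concatenation (parametrized by arc
    length, the i-th segment on [i L, (i+1) L], L = d(x0, g x0)) is an
    N-Morse quasi-geodesic. *)
Definition morse_isometry (g : X -> X) (x0 : X) : Prop :=
  isometry g /\
  exists (x : Z -> X), x 0%Z = x0 /\ (forall n, x (n + 1)%Z = g (x n)) /\
  let L := d x0 (g x0) in 0 < L /\
  exists N, morse_gauge N /\ exists c : R -> X,
    (forall i : Z,
        geodesic_on (fun t => 0 <= t <= L) (fun t => c (IZR i * L + t)) /\
        c (IZR i * L) = x i /\ c (IZR i * L + L) = x (i + 1)%Z) /\
    is_quasi_geodesic line_dom c /\ N_morse N line_dom c.

End MetricDefs.

From Stdlib Require Import Reals ZArith List Lra Lia ClassicalChoice Classical.
Open Scope R_scope.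

Set Implicit Arguments.

(* The axis c of g, the Morse quasi-geodesic through the orbit g^n x0, is moved by g to
   within 2L of its own translate by L = d(x0, g x0); hence g fixes both ends of c in the
   Morse boundary, and it remains to replace c by a geodesic with the same ends.
   Geodesics p_n from c(-n) to c(n) stay uniformly close to c by the Morse property, so each
   passes near c(0). Recentred there, they are uniformly bounded on integer points, and
   properness with a diagonal argument gives an isometric copy of Z, which spans a geodesic
   line gam. Applying the Morse property again, to the pieces of p_n on either side of c(0),
   each half of gam is at finite Hausdorff distance from the same half of c. Being close to
   c, gam is Morse, hence so are its rays; being a geodesic, its two ends are distinct. *)

Lemma coarse_crossing (P Q : R -> Prop) a b : a <= b -> P a -> Q b ->
  (forall s, a <= s <= b -> P s \/ Q s) ->
  exists s1 s2, a <= s1 <= b /\ a <= s2 <= b /\ Rabs (s1 - s2) <= 1 /\ P s1 /\ Q s2.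
Proof.
  intros Hab HPa HQb Hcover.
  destruct (INR_archimed 1 (b - a)) as [K HK]; [lra|].
  set (pt := fun i : nat => Rmin (a + INR i) b).
  assert (Hpt : forall i, a <= pt i <= b).
  { intro i; unfold pt, Rmin; pose proof (pos_INR i); destruct Rle_dec; lra. }
  assert (Hstep : forall i, Rabs (pt i - pt (S i)) <= 1).
  { intro i; unfold pt, Rmin; rewrite S_INR; pose proof (pos_INR i).
    do 2 destruct Rle_dec; split_Rabs; lra. }
  enough (Hwalk : forall k, Q (pt k) -> exists s1 s2, a <= s1 <= b /\ a <= s2 <= b /\
            Rabs (s1 - s2) <= 1 /\ P s1 /\ Q s2).
  { apply (Hwalk K); replace (pt K) with b; auto. unfold pt, Rmin; destruct Rle_dec; lra. }
  induction k as [|k IH]; intro HQ.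
  - replace (pt 0%nat) with a in HQ by (unfold pt, Rmin; simpl; destruct Rle_dec; lra).
    exists a, a; rewrite Rminus_diag, Rabs_R0; repeat split; auto; lra.
  - destruct (classic (Q (pt k))) as [Hq|Hq]; [now apply IH|].
    destruct (Hcover (pt k) (Hpt k)) as [Hp|Hp]; [|contradiction].
    exists (pt k), (pt (S k)); repeat split; auto; apply Hpt.
Qed.

Definition z_of_index (k : nat) : Z :=
  if Nat.odd k then (- Z.of_nat (Nat.div2 k) - 1)%Z else Z.of_nat (Nat.div2 k).

Definition index_of_z (j : Z) : nat :=
  if (0 <=? j)%Z then (2 * Z.to_nat j)%nat else (2 * Z.to_nat (- j - 1) + 1)%nat.

Lemma index_of_zK j : z_of_index (index_of_z j) = j.
Proof.
  unfold index_of_z, z_of_index; destruct (Z.leb_spec 0 j).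
  - rewrite Nat.odd_even, Nat.div2_double; lia.
  - rewrite Nat.odd_odd, Nat.add_1_r, Nat.div2_succ_double; lia.
Qed.

Lemma index_of_z_le j : (index_of_z j <= 2 * Z.to_nat (Z.abs j))%nat.
Proof. unfold index_of_z; destruct (Z.leb_spec 0 j); lia. Qed.

Lemma Int_part_IZR j : Int_part (IZR j) = j.
Proof. symmetry; apply Int_part_spec; lra. Qed.

Lemma Int_part_bounds t : IZR (Int_part t) <= t < IZR (Int_part t) + 1.
Proof. pose proof (base_Int_part t); lra. Qed.

Definition clamp (D z : R) := Rmax 0 (Rmin z D).

Lemma clamp_in D z : 0 <= D -> 0 <= clamp D z <= D.
Proof. intros; unfold clamp, Rmax, Rmin; repeat destruct Rle_dec; lra. Qed.

Lemma clamp_id D z : 0 <= z <= D -> clamp D z = z.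
Proof. intros; unfold clamp, Rmax, Rmin; repeat destruct Rle_dec; lra. Qed.

Lemma clamp_dist D z w : 0 <= w <= D -> Rabs (clamp D z - w) <= Rabs (z - w).
Proof. intros; unfold clamp, Rmax, Rmin; repeat destruct Rle_dec; split_Rabs; lra. Qed.

Lemma Rinv_INR_S_pos (m : nat) : 0 < / INR (S m).
Proof. apply Rinv_0_lt_compat, lt_0_INR; lia. Qed.

Lemma Rinv_INR_S_le_1 (m : nat) : / INR (S m) <= 1.
Proof.
  rewrite <- Rinv_1; apply Rinv_le_contravar; [lra|].
  rewrite S_INR; pose proof (pos_INR m); lra.
Qed.

Lemma Rinv_INR_S_le (m n : nat) : (m <= n)%nat -> / INR (S n) <= / INR (S m).
Proof. intros; apply Rinv_le_contravar; [apply lt_0_INR; lia | apply le_INR; lia]. Qed.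

Lemma eq_of_dist_le_Rinv_INR a b C (M : nat) :
  (forall m, (M <= m)%nat -> Rabs (a - b) <= C * / INR (S m)) -> a = b.
Proof.
  intros H; destruct (Req_dec_T a b) as [E|E]; auto; exfalso.
  assert (Hpos : 0 < Rabs (a - b)) by (apply Rabs_pos_lt; lra).
  destruct (INR_archimed (Rabs (a - b)) C Hpos) as [n Hn].
  set (m := Nat.max M n); specialize (H m ltac:(unfold m; lia)).
  assert (Hm : 0 < INR (S m)) by (apply lt_0_INR; lia).
  apply (Rmult_le_compat_r (INR (S m))) in H; [|lra].
  replace (C * / INR (S m) * INR (S m)) with C in H by (field; lra).
  assert (INR n <= INR (S m)) by (apply le_INR; unfold m; lia).
  assert (INR n * Rabs (a - b) <= INR (S m) * Rabs (a - b)) by (apply Rmult_le_compat_r; lra).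
  lra.
Qed.

Definition strictly_increasing (p : nat -> nat) := forall i, (p i < p (S i))%nat.

Lemma strictly_increasing_lt p : strictly_increasing p ->
  forall i j, (i < j)%nat -> (p i < p j)%nat.
Proof. intros Hp i j Hij; induction Hij; [apply Hp | specialize (Hp m); lia]. Qed.

Lemma strictly_increasing_ge p : strictly_increasing p -> forall i, (i <= p i)%nat.
Proof. intros Hp i; induction i; [lia|]; specialize (Hp i); lia. Qed.

Section Metric.
Variables (X : Type) (d : X -> X -> R).
Hypothesis Hmetric : is_metric d.

Lemma dist_ge0 x y : 0 <= d x y.
Proof. apply Hmetric. Qed.

Lemma dist_xx x : d x x = 0.
Proof. apply Hmetric; reflexivity. Qed.

Lemma dist_sym x y : d x y = d y x.
Proof. apply Hmetric. Qed.

Lemma dist_tri x y z : d x z <= d x y + d y z.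
Proof. apply Hmetric. Qed.

Lemma quasi_geodesic_lower lam eps D q s t : 1 <= lam ->
  quasi_geodesic_on d lam eps D q -> D s -> D t ->
  Rabs (s - t) <= lam * (d (q s) (q t) + eps).
Proof.
  intros Hlam Hq Hs Ht; destruct (Hq s t Hs Ht) as [Hlow _].
  apply (Rmult_le_compat_l lam) in Hlow; [|lra].
  replace (lam * (1 / lam * Rabs (s - t) - eps)) with (Rabs (s - t) - lam * eps)
    in Hlow by (field; lra).
  lra.
Qed.

Lemma quasi_geodesic_upper_le lam eps D q s t r : 0 <= lam ->
  quasi_geodesic_on d lam eps D q -> D s -> D t -> Rabs (s - t) <= r ->
  d (q s) (q t) <= lam * r + eps.
Proof.
  intros Hlam Hq Hs Ht Hr; destruct (Hq s t Hs Ht) as [_ Hup].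
  pose proof (Rmult_le_compat_l lam _ _ Hlam Hr); lra.
Qed.

Lemma geodesic_quasi_geodesic D c : geodesic_on d D c -> quasi_geodesic_on d 1 0 D c.
Proof. intros H s t Hs Ht; rewrite (H s t Hs Ht); split; lra. Qed.

Lemma quasi_geodesic_sub lam eps (D D' : R -> Prop) q : (forall t, D' t -> D t) ->
  quasi_geodesic_on d lam eps D q -> quasi_geodesic_on d lam eps D' q.
Proof. intros HD H s t Hs Ht; apply H; auto. Qed.

Lemma quasi_geodesic_perturb lam eps D q q' K : quasi_geodesic_on d lam eps D q ->
  (forall t, D t -> d (q t) (q' t) <= K) -> quasi_geodesic_on d lam (eps + 2 * K) D q'.
Proof.
  intros Hq HK s t Hs Ht; destruct (Hq s t Hs Ht).
  pose proof (HK s Hs); pose proof (HK t Ht).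
  pose proof (dist_tri (q' s) (q s) (q' t)); pose proof (dist_tri (q s) (q t) (q' t)).
  pose proof (dist_tri (q s) (q' s) (q t)); pose proof (dist_tri (q' s) (q' t) (q t)).
  rewrite (dist_sym (q' s) (q s)), (dist_sym (q' t) (q t)) in *.
  split; lra.
Qed.

Lemma Rabs_opp_minus s t : Rabs (- s - - t) = Rabs (s - t).
Proof. rewrite <- Rabs_Ropp; f_equal; ring. Qed.

Lemma geodesic_reverse gam : geodesic_on d line_dom gam -> geodesic_on d line_dom (neg_end gam).
Proof. intros H s t _ _; unfold neg_end; rewrite H by exact I; apply Rabs_opp_minus. Qed.

Lemma quasi_geodesic_reverse lam eps gam : quasi_geodesic_on d lam eps line_dom gam ->
  quasi_geodesic_on d lam eps line_dom (neg_end gam).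
Proof. intros H s t _ _; unfold neg_end; rewrite <- Rabs_opp_minus; apply H; exact I. Qed.

Lemma N_morse_reverse N gam : N_morse d N line_dom gam -> N_morse d N line_dom (neg_end gam).
Proof.
  intros H lam eps a b c Hlam Heps Hab Hc [s1 [_ E1]] [s2 [_ E2]] t Ht.
  destruct (H lam eps a b c Hlam Heps Hab Hc (ex_intro _ (- s1) (conj I E1))
     (ex_intro _ (- s2) (conj I E2)) t Ht) as [s [_ Hs]].
  exists (- s); split; [exact I|]; unfold neg_end; rewrite Ropp_involutive; exact Hs.
Qed.

Lemma finite_hausdorff_sym D1 (c1 : R -> X) D2 c2 :
  finite_hausdorff d D1 c1 D2 c2 -> finite_hausdorff d D2 c2 D1 c1.
Proof.
  intros [K [H1 H2]]; exists K; split.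
  - intros s Hs; destruct (H2 s Hs) as [t [Ht Hst]]; exists t; rewrite dist_sym; auto.
  - intros t Ht; destruct (H1 t Ht) as [s [Hs Hst]]; exists s; rewrite dist_sym; auto.
Qed.

Lemma finite_hausdorff_trans D1 (c1 : R -> X) D2 c2 D3 c3 :
  finite_hausdorff d D1 c1 D2 c2 -> finite_hausdorff d D2 c2 D3 c3 ->
  finite_hausdorff d D1 c1 D3 c3.
Proof.
  intros [K1 [A1 B1]] [K2 [A2 B2]]; exists (K1 + K2); split.
  - intros s Hs; destruct (A1 s Hs) as [t [Ht H12]]; destruct (A2 t Ht) as [u [Hu H23]].
    exists u; split; auto; pose proof (dist_tri (c1 s) (c2 t) (c3 u)); lra.
  - intros u Hu; destruct (B2 u Hu) as [t [Ht H23]]; destruct (B1 t Ht) as [s [Hs H12]].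
    exists s; split; auto; pose proof (dist_tri (c1 s) (c2 t) (c3 u)); lra.
Qed.

Lemma finite_hausdorff_map (g : X -> X) D1 (c1 : R -> X) D2 c2 :
  (forall x y, d (g x) (g y) = d x y) -> finite_hausdorff d D1 c1 D2 c2 ->
  finite_hausdorff d D1 (fun t => g (c1 t)) D2 (fun t => g (c2 t)).
Proof.
  intros Hg [K [H1 H2]]; exists K; split.
  - intros s Hs; destruct (H1 s Hs) as [t [Ht Hst]]; exists t; rewrite Hg; auto.
  - intros t Ht; destruct (H2 t Ht) as [s [Hs Hst]]; exists s; rewrite Hg; auto.
Qed.

Lemma finite_hausdorff_of_ends (a b : R -> X) :
  finite_hausdorff d ray_dom (pos_end a) ray_dom (pos_end b) ->
  finite_hausdorff d ray_dom (neg_end a) ray_dom (neg_end b) ->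
  finite_hausdorff d line_dom a line_dom b.
Proof.
  unfold pos_end, neg_end, ray_dom.
  intros [Kp [Ap Bp]] [Kn [An Bn]]; exists (Rmax Kp Kn).
  pose proof (Rmax_l Kp Kn); pose proof (Rmax_r Kp Kn).
  split.
  - intros s _; destruct (Rle_dec 0 s).
    + destruct (Ap s) as [t [_ Hst]]; auto; exists t; split; [exact I | lra].
    + destruct (An (- s)) as [t [_ Hst]]; [lra|]; rewrite Ropp_involutive in Hst.
      exists (- t); split; [exact I | lra].
  - intros t _; destruct (Rle_dec 0 t).
    + destruct (Bp t) as [s [_ Hst]]; auto; exists s; split; [exact I | lra].
    + destruct (Bn (- t)) as [s [_ Hst]]; [lra|]; rewrite Ropp_involutive in Hst.
      exists (- s); split; [exact I | lra].
Qed.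

Lemma geodesic_ends_distinct gam : geodesic_on d line_dom gam ->
  ~ same_boundary_point d (pos_end gam) (neg_end gam).
Proof.
  intros Hgeo [K [HK _]].
  destruct (HK (Rabs K + 1)) as [t [Ht Hd]]; [unfold ray_dom; pose proof (Rabs_pos K); lra|].
  unfold ray_dom, pos_end, neg_end in *; rewrite Hgeo in Hd by exact I.
  pose proof (RRle_abs K); split_Rabs; lra.
Qed.

Section MorseLine.
Variables (gam : R -> X) (lam0 eps0 : R).
Hypotheses (Hlam0 : 1 <= lam0) (Heps0 : 0 <= eps0)
  (Hgam : quasi_geodesic_on d lam0 eps0 line_dom gam).

Definition between_bound (M W : R) := M + lam0 * (lam0 * (2 * M + W + eps0)) + eps0.

Lemma between_bound_ge M W : 0 <= M -> 0 <= W -> M <= between_bound M W.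
Proof.
  intros; unfold between_bound.
  assert (0 <= lam0 * (lam0 * (2 * M + W + eps0))) by
    (apply Rmult_le_pos; [lra | apply Rmult_le_pos; lra]).
  lra.
Qed.

Lemma near_between M W al z1 z2 s1 s2 :
  d z1 (gam s1) <= M -> d z2 (gam s2) <= M -> d z1 z2 <= W ->
  (s1 <= al <= s2 \/ s2 <= al <= s1) ->
  d z1 (gam al) <= between_bound M W.
Proof.
  intros H1 H2 H12 Hal.
  assert (Hs12 : d (gam s1) (gam s2) <= 2 * M + W).
  { pose proof (dist_tri (gam s1) z1 (gam s2)); pose proof (dist_tri z1 z2 (gam s2)).
    rewrite (dist_sym (gam s1) z1) in *; lra. }
  pose proof (quasi_geodesic_lower s1 s2 Hlam0 Hgam I I).
  assert (Hal1 : Rabs (s1 - al) <= lam0 * (2 * M + W + eps0)).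
  { assert (lam0 * (d (gam s1) (gam s2) + eps0) <= lam0 * (2 * M + W + eps0))
      by (apply Rmult_le_compat_l; lra).
    split_Rabs; lra. }
  assert (Hlam0pos : 0 <= lam0) by lra.
  pose proof (quasi_geodesic_upper_le s1 al Hlam0pos Hgam I I Hal1).
  pose proof (dist_tri z1 (gam s1) (gam al)); unfold between_bound; lra.
Qed.

Lemma path_passes_near (q : R -> X) a b M W al sa sb : a <= b ->
  (forall u v, a <= u <= b -> a <= v <= b -> Rabs (u - v) <= 1 -> d (q u) (q v) <= W) ->
  (forall u, a <= u <= b -> exists s, d (q u) (gam s) <= M) ->
  d (q a) (gam sa) <= M -> d (q b) (gam sb) <= M ->
  (sa <= al <= sb \/ sb <= al <= sa) ->
  exists u, a <= u <= b /\ d (q u) (gam al) <= between_bound M W.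
Proof.
  intros Hab HW Hcov Ha Hb Hal.
  set (Below := fun u => exists s, s <= al /\ d (q u) (gam s) <= M).
  set (Above := fun u => exists s, al <= s /\ d (q u) (gam s) <= M).
  assert (Hcover : forall u, a <= u <= b -> Below u \/ Above u).
  { intros u Hu; destruct (Hcov u Hu) as [s Hs]; destruct (Rle_dec s al).
    - left; exists s; auto.
    - right; exists s; split; [lra | auto]. }
  assert (Hend : forall P Q : R -> Prop, P a -> Q b -> (forall u, a <= u <= b -> P u \/ Q u) ->
            (forall u1 u2, (P u1 -> Q u2 -> exists s1 s2, d (q u1) (gam s1) <= M /\
               d (q u2) (gam s2) <= M /\ (s1 <= al <= s2 \/ s2 <= al <= s1))) ->
            exists u, a <= u <= b /\ d (q u) (gam al) <= between_bound M W).
  { intros P Q HPa HQb HPQ Hsides.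
    destruct (coarse_crossing P Q Hab HPa HQb HPQ) as (u1 & u2 & Hu1 & Hu2 & H12 & HP & HQ).
    destruct (Hsides u1 u2 HP HQ) as (s1 & s2 & D1 & D2 & Hs).
    exists u1; split; auto; exact (near_between D1 D2 (HW u1 u2 Hu1 Hu2 H12) Hs). }
  destruct Hal as [Hal|Hal].
  - apply (Hend Below Above).
    + exists sa; split; [lra | auto].
    + exists sb; split; [lra | auto].
    + exact Hcover.
    + intros u1 u2 [s1 [? ?]] [s2 [? ?]]; exists s1, s2; repeat split; auto; lra.
  - apply (Hend Above Below).
    + exists sa; split; [lra | auto].
    + exists sb; split; [lra | auto].
    + intros u Hu; destruct (Hcover u Hu); auto.
    + intros u1 u2 [s1 [? ?]] [s2 [? ?]]; exists s1, s2; repeat split; auto; lra.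
Qed.

Lemma ray_close_of_sided (a : R -> X) K1 K2 :
  (forall t, 0 <= t -> exists s, 0 <= s /\ d (a t) (gam s) <= K1) ->
  (forall t, t <= 0 -> exists s, s <= 0 /\ d (a t) (gam s) <= K1) ->
  (forall s, exists t, d (a t) (gam s) <= K2) ->
  finite_hausdorff d ray_dom (pos_end a) ray_dom gam.
Proof.
  intros Hpos Hneg Hall.
  destruct (Hpos 0 (Rle_refl 0)) as [sp [Hsp Dp]].
  destruct (Hneg 0 (Rle_refl 0)) as [sn [Hsn Dn]].
  assert (HK1 : 0 <= K1) by (pose proof (dist_ge0 (a 0) (gam sp)); lra).
  assert (H0 : d (a 0) (gam 0) <= between_bound K1 0).
  { refine (near_between Dp Dn _ _); [rewrite dist_xx; lra | right; lra]. }
  set (K := Rmax K1 (Rmax K2 (between_bound K1 0 + between_bound K1 K2))).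
  assert (HK : K1 <= K /\ K2 <= K /\ between_bound K1 0 + between_bound K1 K2 <= K).
  { unfold K; pose proof (Rmax_l K1 (Rmax K2 (between_bound K1 0 + between_bound K1 K2))).
    pose proof (Rmax_r K1 (Rmax K2 (between_bound K1 0 + between_bound K1 K2))).
    pose proof (Rmax_l K2 (between_bound K1 0 + between_bound K1 K2)).
    pose proof (Rmax_r K2 (between_bound K1 0 + between_bound K1 K2)); lra. }
  exists K; unfold pos_end, ray_dom; split.
  - intros t Ht; destruct (Hpos t Ht) as [s [Hs Hts]]; exists s; split; [auto | lra].
  - intros s0 Hs0; destruct (Hall s0) as [t Ht].
    destruct (Rle_dec 0 t) as [Ht0|Ht0]; [exists t; split; [auto | lra]|].
    destruct (Hneg t ltac:(lra)) as [s [Hs Hts]].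
    assert (Hs00 : d (gam s0) (gam 0) <= between_bound K1 K2).
    { refine (near_between (s1 := s0) _ Hts _ _);
        [rewrite dist_xx; lra | rewrite dist_sym; auto | right; lra]. }
    exists 0; split; [lra|].
    pose proof (dist_tri (a 0) (gam 0) (gam s0)); rewrite (dist_sym (gam 0) (gam s0)) in *; lra.
Qed.

Variable N : R -> R -> R.
Hypothesis HN : N_morse d N line_dom gam.

Definition segment_bound (lam eps : R) :=
  let B := between_bound (N lam eps) (lam + eps) in lam * (lam * (2 * B + eps)) + eps + B.

Lemma segment_bound_ge lam eps : 1 <= lam -> 0 <= eps -> 0 <= N lam eps ->
  N lam eps <= segment_bound lam eps.
Proof.
  intros; unfold segment_bound.
  assert (N lam eps <= between_bound (N lam eps) (lam + eps)) by (apply between_bound_ge; lra).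
  assert (0 <= lam * (lam * (2 * between_bound (N lam eps) (lam + eps) + eps))) by
    (apply Rmult_le_pos; [lra | apply Rmult_le_pos; lra]).
  lra.
Qed.

Lemma morse_segment_right lam eps a b (q : R -> X) al s1 s2 t :
  1 <= lam -> 0 <= eps -> a <= t <= b ->
  quasi_geodesic_on d lam eps (fun u => a <= u <= b) q ->
  q a = gam s1 -> q b = gam s2 -> al <= s1 -> al <= s2 ->
  exists s, al <= s /\ d (q t) (gam s) <= segment_bound lam eps.
Proof.
  intros Hlam Heps Ht Hq Ea Eb H1 H2.
  assert (Hlam_pos : 0 <= lam) by lra.
  assert (Hcov : forall u, a <= u <= b -> exists s, d (q u) (gam s) <= N lam eps).
  { intros u Hu; destruct (@HN lam eps a b q Hlam Heps ltac:(lra) Hq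
      (ex_intro _ s1 (conj I Ea)) (ex_intro _ s2 (conj I Eb)) u Hu) as [s [_ Hs]].
    exists s; exact Hs. }
  destruct (Hcov t Ht) as [s Hs].
  assert (HN0 : 0 <= N lam eps) by (pose proof (dist_ge0 (q t) (gam s)); lra).
  destruct (Rle_dec al s) as [Has|Has].
  { exists s; split; auto; pose proof (segment_bound_ge Hlam Heps HN0); lra. }
  (* otherwise q passes near gam al both before and after t *)
  assert (Hstep : forall u v, a <= u <= b -> a <= v <= b -> Rabs (u - v) <= 1 ->
     d (q u) (q v) <= lam * 1 + eps).
  { intros u v Hu Hv Huv; apply (quasi_geodesic_upper_le u v Hlam_pos Hq Hu Hv Huv). }
  rewrite Rmult_1_r in Hstep.
  destruct (@path_passes_near q a t (N lam eps) (lam + eps) al s1 s) as [w1 [Hw1 Dw1]];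
    try lra.
  { intros u v Hu Hv; apply Hstep; lra. }
  { intros u Hu; apply Hcov; lra. }
  { rewrite Ea, dist_xx; auto. }
  destruct (@path_passes_near q t b (N lam eps) (lam + eps) al s s2) as [w2 [Hw2 Dw2]];
    try lra.
  { intros u v Hu Hv; apply Hstep; lra. }
  { intros u Hu; apply Hcov; lra. }
  { rewrite Eb, dist_xx; auto. }
  assert (Hw1a : a <= w1 <= b) by lra.
  set (B := between_bound (N lam eps) (lam + eps)) in *.
  assert (D12 : d (q w1) (q w2) <= 2 * B).
  { pose proof (dist_tri (q w1) (gam al) (q w2)); rewrite (dist_sym (gam al) (q w2)) in *; lra. }
  assert (Hw2a : a <= w2 <= b) by lra.
  pose proof (quasi_geodesic_lower w1 w2 Hlam Hq Hw1a Hw2a) as Hw12.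
  assert (Htw1 : Rabs (t - w1) <= lam * (2 * B + eps)).
  { assert (lam * (d (q w1) (q w2) + eps) <= lam * (2 * B + eps))
      by (apply Rmult_le_compat_l; lra).
    split_Rabs; lra. }
  pose proof (quasi_geodesic_upper_le t w1 Hlam_pos Hq Ht Hw1a Htw1).
  exists al; split; [lra|].
  pose proof (dist_tri (q t) (q w1) (gam al)); unfold segment_bound; fold B; lra.
Qed.

End MorseLine.

Lemma morse_segment_left gam lam0 eps0 N lam eps a b (q : R -> X) be s1 s2 t :
  1 <= lam0 -> 0 <= eps0 -> quasi_geodesic_on d lam0 eps0 line_dom gam ->
  N_morse d N line_dom gam -> 1 <= lam -> 0 <= eps -> a <= t <= b ->
  quasi_geodesic_on d lam eps (fun u => a <= u <= b) q ->
  q a = gam s1 -> q b = gam s2 -> s1 <= be -> s2 <= be ->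
  exists s, s <= be /\ d (q t) (gam s) <= segment_bound lam0 eps0 N lam eps.
Proof.
  intros Hlam0 Heps0 Hgam HN Hlam Heps Ht Hq Ea Eb H1 H2.
  assert (Ea' : q a = neg_end gam (- s1)) by (unfold neg_end; rewrite Ropp_involutive; auto).
  assert (Eb' : q b = neg_end gam (- s2)) by (unfold neg_end; rewrite Ropp_involutive; auto).
  destruct (morse_segment_right (al := - be) Hlam0 Heps0 (quasi_geodesic_reverse Hgam)
    (N_morse_reverse HN) Hlam Heps Ht Hq Ea' Eb' ltac:(lra) ltac:(lra)) as [s [Hs Ds]].
  exists (- s); split; [lra | exact Ds].
Qed.

Lemma geodesic_ray_morse gam : geodesic_on d line_dom gam ->
  is_morse d line_dom gam -> is_morse d ray_dom gam.
Proof.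
  intros Hgeo [N [Hgauge HN]].
  exists (segment_bound 1 0 N); split.
  - intros lam eps Hlam Heps; pose proof (Hgauge lam eps Hlam Heps).
    assert (N lam eps <= segment_bound 1 0 N lam eps) by (apply segment_bound_ge; lra).
    lra.
  - intros lam eps a b c Hlam Heps Hab Hc [s1 [H1 E1]] [s2 [H2 E2]] t Ht.
    destruct (morse_segment_right (al := 0) (Rle_refl 1) (Rle_refl 0)
      (geodesic_quasi_geodesic Hgeo) HN Hlam Heps Ht Hc E1 E2 H1 H2) as [s [Hs Ds]].
    exists s; split; auto.
Qed.

Lemma morse_line_rays gam : geodesic_on d line_dom gam -> is_morse d line_dom gam ->
  morse_geodesic_ray d (pos_end gam) /\ morse_geodesic_ray d (neg_end gam).
Proof.
  intros Hgeo Hmorse; split; split.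
  - intros s t _ _; apply Hgeo; exact I.
  - exact (geodesic_ray_morse Hgeo Hmorse).
  - intros s t _ _; apply (geodesic_reverse Hgeo); exact I.
  - destruct Hmorse as [N [Hgauge HN]].
    exact (geodesic_ray_morse (geodesic_reverse Hgeo)
             (ex_intro _ N (conj Hgauge (N_morse_reverse HN)))).
Qed.

Lemma morse_of_finite_hausdorff gam c N : finite_hausdorff d line_dom gam line_dom c ->
  morse_gauge N -> N_morse d N line_dom c -> is_morse d line_dom gam.
Proof.
  intros [K [Hgc Hcg]] Hgauge HN.
  assert (HK : 0 <= K)
    by (destruct (Hgc 0 I) as [s [_ Hs]]; pose proof (dist_ge0 (gam 0) (c s)); lra).
  exists (fun lam eps => N lam (eps + 2 * K) + K); split.
  { intros lam eps Hlam Heps; pose proof (Hgauge lam (eps + 2 * K) Hlam ltac:(lra)); lra. }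
  intros lam eps a b q Hlam Heps Hab Hq [s1 [_ E1]] [s2 [_ E2]] t Ht.
  pose proof (Hgauge lam (eps + 2 * K) Hlam ltac:(lra)).
  destruct (Req_dec_T t a) as [->|Nta].
  { exists s1; split; [exact I|]; rewrite E1, dist_xx; lra. }
  destruct (Req_dec_T t b) as [->|Ntb].
  { exists s2; split; [exact I|]; rewrite E2, dist_xx; lra. }
  (* move the endpoints of q onto c, at a cost of K *)
  destruct (Hgc s1 I) as [u1 [_ Hu1]]; destruct (Hgc s2 I) as [u2 [_ Hu2]].
  set (q' := fun u => if Req_dec_T u a then c u1 else if Req_dec_T u b then c u2 else q u).
  assert (Hq' : quasi_geodesic_on d lam (eps + 2 * K) (fun u => a <= u <= b) q').
  { eapply quasi_geodesic_perturb; [exact Hq|]; intros u _; unfold q'.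
    destruct (Req_dec_T u a) as [->|]; [rewrite E1; auto|].
    destruct (Req_dec_T u b) as [->|]; [rewrite E2; auto|].
    rewrite dist_xx; lra. }
  assert (Ea : q' a = c u1) by (unfold q'; destruct (Req_dec_T a a); congruence).
  assert (Eb : q' b = c u2).
  { unfold q'; destruct (Req_dec_T b a); [lra|]; destruct (Req_dec_T b b); congruence. }
  assert (Et : q' t = q t).
  { unfold q'; destruct (Req_dec_T t a); [congruence|]; destruct (Req_dec_T t b); congruence. }
  destruct (HN lam (eps + 2 * K) a b q' Hlam ltac:(lra) Hab Hq' (ex_intro _ u1 (conj I Ea))
    (ex_intro _ u2 (conj I Eb)) t Ht) as [s [_ Hs]].
  rewrite Et in Hs; destruct (Hcg s I) as [t' [_ Ht']].
  exists t'; split; [exact I|].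
  pose proof (dist_tri (q t) (c s) (gam t')); rewrite (dist_sym (c s) (gam t')) in *; lra.
Qed.

Lemma bounded_cluster_point (Hp : proper_space d) (u : nat -> X) x r :
  (forall n, d x (u n) <= r) ->
  exists y, forall e, 0 < e -> forall m, exists n, (m <= n)%nat /\ d y (u n) < e.
Proof.
  intros Hb; apply NNPP; intro Hno.
  assert (Havoid : forall y, exists e m, 0 < e /\ forall n, (m <= n)%nat -> e <= d y (u n)).
  { intro y; apply NNPP; intro H1; apply Hno; exists y; intros e He m.
    apply NNPP; intro H2; apply H1; exists e, m; split; auto.
    intros n Hn; apply Rnot_lt_le; intro H3; apply H2; exists n; auto. }
  (* balls that the tail of u eventually avoids cover the compact ball around x *)
  set (U := fun (i : (X * R) * nat) z => let '(y, e, m) := i in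
        0 < e /\ (forall n, (m <= n)%nat -> e <= d y (u n)) /\ d y z < e).
  destruct (Hp x r _ U) as [l Hl].
  - intros [[y e] m] z [He [Hn Hz]]; exists (e - d y z); split; [lra|].
    intros w Hw; simpl; split; [auto | split; [auto|]].
    pose proof (dist_tri y z w); lra.
  - intros z _; destruct (Havoid z) as [e [m [He Hn]]]; exists (z, e, m).
    simpl; split; [auto | split; [auto|]]; rewrite dist_xx; auto.
  - set (M := list_max (map snd l)).
    destruct (Hl (u M) (Hb M)) as [[[y e] m] [Hin [He [Hn Hz]]]].
    assert (HmM : (m <= M)%nat).
    { pose proof (proj1 (list_max_le (map snd l) M) (le_n _)) as HM.
      rewrite Forall_forall in HM; apply HM, (in_map snd _ _ Hin). }
    specialize (Hn M HmM); lra.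
Qed.

Lemma bounded_subsequence (Hp : proper_space d) (u : nat -> X) x r :
  (forall n, d x (u n) <= r) ->
  exists y (phi : nat -> nat), strictly_increasing phi /\ forall k, d y (u (phi k)) < / INR (S k).
Proof.
  intros Hb; destruct (bounded_cluster_point Hp u Hb) as [y Hy].
  assert (Hpick : forall mk : nat * nat,
            exists n, (fst mk <= n)%nat /\ d y (u n) < / INR (S (snd mk))).
  { intros [m k]; apply Hy, Rinv_INR_S_pos. }
  destruct (choice _ Hpick) as [pick Hpick'].
  set (phi := nat_rect (fun _ => nat) (pick (0, 0)%nat) (fun k pk => pick (S pk, S k))).
  exists y, phi; split.
  - intro i; change (phi (S i)) with (pick (S (phi i), S i)).
    destruct (Hpick' (S (phi i), S i)) as [H _]; simpl in H; lia.
  - intros [|k]; [apply (Hpick' (0, 0)%nat)|].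
    change (phi (S k)) with (pick (S (phi k), S k)); apply (Hpick' (S (phi k), S k)).
Qed.

Lemma diagonal_subsequence (Hp : proper_space d) (f : nat -> nat -> X) x (r : nat -> R) :
  (forall n k, d x (f n k) <= r k) ->
  exists (y : nat -> X) (del : nat -> nat), (forall m, (m <= del m)%nat) /\
    forall k m, (k <= m)%nat -> d (y k) (f (del m) k) < / INR (S m).
Proof.
  intros Hb.
  assert (Hrefine : forall pk : (nat -> nat) * nat, exists p : (nat -> nat) * X,
     strictly_increasing (fst p) /\
     forall i, d (snd p) (f (fst pk (fst p i)) (snd pk)) < / INR (S i)).
  { intros [ps k].
    destruct (bounded_subsequence Hp (fun i => f (ps i) k) (fun n => Hb (ps n) k))
      as [y [phi [H1 H2]]].
    exists (phi, y); split; auto. }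
  destruct (choice _ Hrefine) as [F HF].
  (* Psi k is the k-th nested subsequence: f (Psi k i) j converges for every j < k *)
  set (Psi := nat_rect (fun _ => nat -> nat) (fun m => m)
                (fun k ps => fun m => ps (fst (F (ps, k)) m))).
  assert (PsiS : forall k m, Psi (S k) m = Psi k (fst (F (Psi k, k)) m)) by reflexivity.
  assert (Psi_incr : forall k, strictly_increasing (Psi k)).
  { induction k as [|k IH]; intro i; [simpl; lia|].
    rewrite !PsiS; apply strictly_increasing_lt; auto; apply (proj1 (HF (Psi k, k))). }
  assert (Psi_nested : forall k k', (k <= k')%nat -> exists rho, strictly_increasing rho /\
            forall m, Psi k' m = Psi k (rho m)).
  { intros k k' H; induction H as [|k' H [rho [Hr Hrho]]].
    - exists (fun m => m); split; [intro; lia | auto].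
    - exists (fun m => rho (fst (F (Psi k', k')) m)); split.
      + intro i; apply strictly_increasing_lt; auto; apply (proj1 (HF (Psi k', k'))).
      + intro m; rewrite PsiS, Hrho; reflexivity. }
  exists (fun k => snd (F (Psi k, k))), (fun m => Psi (S m) m); split.
  - intro m; apply (strictly_increasing_ge (Psi_incr (S m))).
  - intros k m Hkm; destruct (Psi_nested (S k) (S m) ltac:(lia)) as [rho [Hr Hrho]].
    rewrite Hrho, PsiS.
    eapply Rlt_le_trans; [apply (proj2 (HF (Psi k, k)) (rho m))|].
    apply Rinv_INR_S_le, (strictly_increasing_ge Hr).
Qed.

Lemma geodesic_through_points (Hg : geodesic_space d) (y : Z -> X) :
  (forall j k, d (y j) (y k) = Rabs (IZR j - IZR k)) ->
  exists gam, geodesic_on d line_dom gam /\ forall j, gam (IZR j) = y j.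
Proof.
  intros Hy.
  assert (Hseg : forall j, exists sg : R -> X, geodesic_on d (fun t => 0 <= t <= 1) sg /\
      sg 0 = y j /\ sg 1 = y (j + 1)%Z).
  { intro j; destruct (Hg (y j) (y (j + 1)%Z)) as [sg Hsg].
    replace (d (y j) (y (j + 1)%Z)) with 1 in Hsg by (rewrite Hy, plus_IZR; split_Rabs; lra).
    exists sg; exact Hsg. }
  destruct (choice _ Hseg) as [sg Hsg].
  set (gam := fun t => sg (Int_part t) (t - IZR (Int_part t))).
  assert (Hsg_dist : forall j u v, 0 <= u <= 1 -> 0 <= v <= 1 ->
            d (sg j u) (sg j v) = Rabs (u - v)) by (intros; apply (proj1 (Hsg j)); auto).
  assert (Hleft : forall s, d (y (Int_part s)) (gam s) = s - IZR (Int_part s)).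
  { intro s; pose proof (Int_part_bounds s); unfold gam.
    rewrite <- (proj1 (proj2 (Hsg (Int_part s)))), Hsg_dist by lra; split_Rabs; lra. }
  assert (Hright : forall s, d (gam s) (y (Int_part s + 1)%Z) = IZR (Int_part s) + 1 - s).
  { intro s; pose proof (Int_part_bounds s); unfold gam.
    rewrite <- (proj2 (proj2 (Hsg (Int_part s)))), Hsg_dist by lra; split_Rabs; lra. }
  assert (Hmono : forall s t, s <= t -> d (gam s) (gam t) = t - s).
  { intros s t Hst; pose proof (Int_part_bounds s); pose proof (Int_part_bounds t).
    pose proof (Hleft s); pose proof (Hright s); pose proof (Hleft t); pose proof (Hright t).
    assert (Hkm : (Int_part s < Int_part t + 1)%Z) by (apply lt_IZR; rewrite plus_IZR; lra).
    destruct (Z.eq_dec (Int_part s) (Int_part t)) as [E|E].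
    - unfold gam; rewrite <- E, Hsg_dist by (rewrite <- E in *; lra); split_Rabs; lra.
    - (* exact distances to y k, y (k+1), y m, y (m+1) pinch d (gam s) (gam t) *)
      set (k := Int_part s) in *; set (m := Int_part t) in *.
      assert (Hk1 : IZR k + 1 <= IZR m) by (rewrite <- plus_IZR; apply IZR_le; lia).
      assert (d (y (k + 1)%Z) (y m) = IZR m - IZR k - 1)
        by (rewrite Hy, plus_IZR; split_Rabs; lra).
      assert (d (y k) (y (m + 1)%Z) = IZR m + 1 - IZR k)
        by (rewrite Hy, plus_IZR; split_Rabs; lra).
      pose proof (dist_tri (gam s) (y (k + 1)%Z) (gam t)).
      pose proof (dist_tri (y (k + 1)%Z) (y m) (gam t)).
      pose proof (dist_tri (y k) (gam s) (y (m + 1)%Z)).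
      pose proof (dist_tri (gam s) (gam t) (y (m + 1)%Z)).
      lra. }
  exists gam; split.
  - intros s t _ _; destruct (Rle_dec s t).
    + rewrite Hmono by auto; split_Rabs; lra.
    + rewrite dist_sym, Hmono by lra; split_Rabs; lra.
  - intro j; unfold gam; rewrite Int_part_IZR, Rminus_diag; apply Hsg.
Qed.

Lemma geodesic_near_Int_part gam t : geodesic_on d line_dom gam ->
  d (gam t) (gam (IZR (Int_part t))) <= 1.
Proof. intro Hgeo; rewrite Hgeo by exact I; pose proof (Int_part_bounds t); split_Rabs; lra. Qed.

Section LimitLine.
Variables (c : R -> X) (lam0 eps0 : R) (N : R -> R -> R).
Hypotheses (Hlam0 : 1 <= lam0) (Heps0 : 0 <= eps0)
  (Hc : quasi_geodesic_on d lam0 eps0 line_dom c)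
  (HN : N_morse d N line_dom c) (Hgauge : morse_gauge N).

Definition chord_length (n : nat) := d (c (- INR n)) (c (INR n)).

Variable p : nat -> R -> X.
Hypothesis Hchord : forall n, geodesic_on d (fun t => 0 <= t <= chord_length n) (p n) /\
  p n 0 = c (- INR n) /\ p n (chord_length n) = c (INR n).

Let chord_radius := between_bound lam0 eps0 (N 1 0) 1.

Lemma chord_dist n u v : 0 <= u <= chord_length n -> 0 <= v <= chord_length n ->
  d (p n u) (p n v) = Rabs (u - v).
Proof. intros; apply (proj1 (Hchord n)); auto. Qed.

Lemma chord_passes_near n s0 : - INR n <= s0 <= INR n ->
  exists t, 0 <= t <= chord_length n /\ d (p n t) (c s0) <= chord_radius.
Proof.
  intro Hs0; destruct (Hchord n) as (Hgeo & Hp0 & Hp1).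
  assert (Hlen : 0 <= chord_length n) by apply dist_ge0.
  assert (Hnear : forall u, 0 <= u <= chord_length n -> exists s, d (p n u) (c s) <= N 1 0).
  { intros u Hu.
    destruct (@HN 1 0 0 (chord_length n) (p n) (Rle_refl 1) (Rle_refl 0) Hlen
      (geodesic_quasi_geodesic Hgeo) (ex_intro _ (- INR n) (conj I Hp0))
      (ex_intro _ (INR n) (conj I Hp1)) u Hu) as [s [_ Hs]].
    exists s; exact Hs. }
  assert (HN0 : 0 <= N 1 0) by (apply Hgauge; lra).
  apply (path_passes_near Hlam0 Hc (p n) Hlen (W := 1) (sa := - INR n) (sb := INR n)).
  - intros u v Hu Hv Huv; rewrite chord_dist; auto.
  - exact Hnear.
  - rewrite Hp0, dist_xx; auto.
  - rewrite Hp1, dist_xx; auto.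
  - left; exact Hs0.
Qed.

Variable tau : nat -> R.
Hypothesis Htau : forall n,
  0 <= tau n <= chord_length n /\ d (p n (tau n)) (c 0) <= chord_radius.

Lemma chord_radius_ge0 : 0 <= chord_radius.
Proof. pose proof (dist_ge0 (p 0%nat (tau 0%nat)) (c 0)); pose proof (proj2 (Htau 0)); lra. Qed.

Lemma tau_far_from_ends r : exists n0, forall n, (n0 <= n)%nat ->
  r <= tau n /\ r <= chord_length n - tau n.
Proof.
  assert (Hfar : forall n, INR n <= lam0 * (tau n + chord_radius + eps0) /\
                           INR n <= lam0 * (chord_length n - tau n + chord_radius + eps0)).
  { intro n; destruct (Hchord n) as (_ & Hp0 & Hp1); destruct (Htau n) as [Ht Hd].
    pose proof (pos_INR n).
    pose proof (quasi_geodesic_lower (- INR n) 0 Hlam0 Hc I I) as Hl.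
    pose proof (quasi_geodesic_lower 0 (INR n) Hlam0 Hc I I) as Hr.
    replace (Rabs (- INR n - 0)) with (INR n) in Hl by (split_Rabs; lra).
    replace (Rabs (0 - INR n)) with (INR n) in Hr by (split_Rabs; lra).
    pose proof (@chord_dist n 0 (tau n) ltac:(lra) Ht) as D0.
    pose proof (@chord_dist n (tau n) (chord_length n) Ht ltac:(lra)) as D1.
    rewrite Hp0 in D0; rewrite Hp1 in D1.
    pose proof (dist_tri (c (- INR n)) (p n (tau n)) (c 0)).
    pose proof (dist_tri (c 0) (p n (tau n)) (c (INR n))).
    rewrite (dist_sym (c 0) (p n (tau n))) in *.
    split_Rabs; split; nra. }
  destruct (INR_archimed 1 (lam0 * (r + chord_radius + eps0))) as [n0 Hn0]; [lra|].
  exists n0; intros n Hn; assert (INR n0 <= INR n) by (apply le_INR; auto).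
  destruct (Hfar n); split; nra.
Qed.

Definition chord_point (n : nat) (j : Z) := p n (clamp (chord_length n) (tau n + IZR j)).

Lemma chord_point_bound n j : d (c 0) (chord_point n j) <= chord_radius + Rabs (IZR j).
Proof.
  destruct (Htau n) as [Ht Hd]; unfold chord_point.
  set (u := clamp (chord_length n) (tau n + IZR j)).
  assert (Hu : 0 <= u <= chord_length n) by (apply clamp_in; lra).
  pose proof (dist_tri (c 0) (p n (tau n)) (p n u)) as Htri.
  rewrite (@chord_dist n (tau n) u Ht Hu), (dist_sym (c 0) (p n (tau n))) in Htri.
  pose proof (clamp_dist (tau n + IZR j) Ht) as Hclamp; fold u in Hclamp.
  replace (tau n + IZR j - tau n) with (IZR j) in Hclamp by ring.
  rewrite Rabs_minus_sym in Hclamp; lra.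
Qed.

Lemma chord_point_eq n j : 0 <= tau n + IZR j <= chord_length n ->
  chord_point n j = p n (tau n + IZR j).
Proof. intro; unfold chord_point; rewrite clamp_id; auto. Qed.

(* Subsegments from tau n now start exactly on c, as N_morse requires. *)
Definition pinned_chord (n : nat) (t : R) := if Req_dec_T t (tau n) then c 0 else p n t.

Lemma pinned_chord_close n t : d (p n t) (pinned_chord n t) <= chord_radius.
Proof.
  unfold pinned_chord; destruct Req_dec_T as [->|_]; [apply Htau|].
  rewrite dist_xx; apply chord_radius_ge0.
Qed.

Lemma pinned_chord_tau n : pinned_chord n (tau n) = c 0.
Proof. unfold pinned_chord; destruct Req_dec_T; congruence. Qed.

Lemma pinned_chord_quasi_geodesic n : quasi_geodesic_on d 1 (0 + 2 * chord_radius)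
  (fun t => 0 <= t <= chord_length n) (pinned_chord n).
Proof.
  eapply quasi_geodesic_perturb; [apply geodesic_quasi_geodesic, Hchord|].
  intros t _; apply pinned_chord_close.
Qed.

Lemma pinned_chord_ends n :
  (exists s, s <= 0 /\ pinned_chord n 0 = c s) /\
  (exists s, 0 <= s /\ pinned_chord n (chord_length n) = c s).
Proof.
  pose proof (pos_INR n); destruct (Hchord n) as (_ & Hp0 & Hp1).
  unfold pinned_chord; split; destruct Req_dec_T.
  - exists 0; split; [lra | reflexivity].
  - exists (- INR n); split; [lra | exact Hp0].
  - exists 0; split; [lra | reflexivity].
  - exists (INR n); split; [lra | exact Hp1].
Qed.

Variables (y : Z -> X) (del : nat -> nat).
Hypotheses (Hdel : forall m, (m <= del m)%nat)
  (Hy : forall j m, (index_of_z j <= m)%nat -> d (y j) (chord_point (del m) j) < / INR (S m)).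

Lemma tau_del_centered r : exists M, forall m, (M <= m)%nat ->
  forall x, Rabs x <= r -> 0 <= tau (del m) + x <= chord_length (del m).
Proof.
  destruct (tau_far_from_ends r) as [n0 Hn0]; exists n0; intros m Hm x Hx.
  destruct (Hn0 (del m)) as [H1 H2]; [specialize (Hdel m); lia|].
  split_Rabs; lra.
Qed.

Lemma limit_dist j k : d (y j) (y k) = Rabs (IZR j - IZR k).
Proof.
  destruct (tau_del_centered (Rabs (IZR j) + Rabs (IZR k))) as [M HM].
  apply (@eq_of_dist_le_Rinv_INR _ _ 2 (Nat.max M (Nat.max (index_of_z j) (index_of_z k)))).
  intros m Hm; set (n := del m).
  pose proof (Hy j (m := m) ltac:(lia)) as Yj; pose proof (Hy k (m := m) ltac:(lia)) as Yk.
  pose proof (Rabs_pos (IZR j)); pose proof (Rabs_pos (IZR k)).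
  assert (Hj : 0 <= tau n + IZR j <= chord_length n) by (apply HM; [lia | lra]).
  assert (Hk : 0 <= tau n + IZR k <= chord_length n) by (apply HM; [lia | lra]).
  fold n in Yj, Yk; rewrite chord_point_eq in Yj, Yk by auto.
  assert (E : d (p n (tau n + IZR j)) (p n (tau n + IZR k)) = Rabs (IZR j - IZR k)).
  { rewrite chord_dist by auto; f_equal; ring. }
  pose proof (dist_tri (y j) (p n (tau n + IZR j)) (y k)).
  pose proof (dist_tri (p n (tau n + IZR j)) (p n (tau n + IZR k)) (y k)).
  pose proof (dist_tri (p n (tau n + IZR j)) (y j) (p n (tau n + IZR k))).
  pose proof (dist_tri (y j) (y k) (p n (tau n + IZR k))).
  pose proof (dist_sym (p n (tau n + IZR j)) (y j)).
  pose proof (dist_sym (p n (tau n + IZR k)) (y k)).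
  split_Rabs; lra.
Qed.

Let side_radius := chord_radius + segment_bound lam0 eps0 N 1 (0 + 2 * chord_radius) + 1.

Lemma limit_near_pos j : (0 <= j)%Z -> exists s, 0 <= s /\ d (y j) (c s) <= side_radius.
Proof.
  intro Hj; apply IZR_le in Hj.
  destruct (tau_del_centered (IZR j)) as [M HM].
  set (m := Nat.max M (index_of_z j)); set (n := del m).
  pose proof (Hy j (m := m) ltac:(unfold m; lia)) as Yj; fold n in Yj.
  assert (Hjn : 0 <= tau n + IZR j <= chord_length n)
    by (apply HM; [unfold m; lia | split_Rabs; lra]).
  rewrite chord_point_eq in Yj by exact Hjn.
  destruct (pinned_chord_ends n) as [_ [s2 [Hs2 E2]]].
  assert (Hq : quasi_geodesic_on d 1 (0 + 2 * chord_radius)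
                 (fun u => tau n <= u <= chord_length n) (pinned_chord n)).
  { apply (quasi_geodesic_sub (D := fun u => 0 <= u <= chord_length n));
      [pose proof (Htau n); intros; lra | apply pinned_chord_quasi_geodesic]. }
  assert (Heps : 0 <= 0 + 2 * chord_radius) by (pose proof chord_radius_ge0; lra).
  assert (Ht : tau n <= tau n + IZR j <= chord_length n) by lra.
  destruct (morse_segment_right (al := 0) Hlam0 Heps0 Hc HN (Rle_refl 1) Heps Ht Hq
      (pinned_chord_tau n) E2 (Rle_refl 0) Hs2) as [s [Hs Ds]].
  exists s; split; auto.
  pose proof (pinned_chord_close n (tau n + IZR j)); pose proof (Rinv_INR_S_le_1 m).
  pose proof (dist_tri (y j) (p n (tau n + IZR j)) (c s)).
  pose proof (dist_tri (p n (tau n + IZR j)) (pinned_chord n (tau n + IZR j)) (c s)).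
  unfold side_radius; lra.
Qed.

Lemma limit_near_neg j : (j <= 0)%Z -> exists s, s <= 0 /\ d (y j) (c s) <= side_radius.
Proof.
  intro Hj; apply IZR_le in Hj.
  destruct (tau_del_centered (- IZR j)) as [M HM].
  set (m := Nat.max M (index_of_z j)); set (n := del m).
  pose proof (Hy j (m := m) ltac:(unfold m; lia)) as Yj; fold n in Yj.
  assert (Hjn : 0 <= tau n + IZR j <= chord_length n)
    by (apply HM; [unfold m; lia | split_Rabs; lra]).
  rewrite chord_point_eq in Yj by exact Hjn.
  destruct (pinned_chord_ends n) as [[s1 [Hs1 E1]] _].
  assert (Hq : quasi_geodesic_on d 1 (0 + 2 * chord_radius)
                 (fun u => 0 <= u <= tau n) (pinned_chord n)).
  { apply (quasi_geodesic_sub (D := fun u => 0 <= u <= chord_length n));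
      [pose proof (Htau n); intros; lra | apply pinned_chord_quasi_geodesic]. }
  assert (Heps : 0 <= 0 + 2 * chord_radius) by (pose proof chord_radius_ge0; lra).
  assert (Ht : 0 <= tau n + IZR j <= tau n) by lra.
  destruct (morse_segment_left (be := 0) Hlam0 Heps0 Hc HN (Rle_refl 1) Heps Ht Hq
      E1 (pinned_chord_tau n) Hs1 (Rle_refl 0)) as [s [Hs Ds]].
  exists s; split; auto.
  pose proof (pinned_chord_close n (tau n + IZR j)); pose proof (Rinv_INR_S_le_1 m).
  pose proof (dist_tri (y j) (p n (tau n + IZR j)) (c s)).
  pose proof (dist_tri (p n (tau n + IZR j)) (pinned_chord n (tau n + IZR j)) (c s)).
  unfold side_radius; lra.
Qed.

Lemma line_near_limit s0 : exists j, d (y j) (c s0) <= chord_radius + 2.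
Proof.
  set (S0 := 2 * chord_radius + d (c s0) (c 0)).
  destruct (INR_archimed 1 (Rabs s0)) as [n1 Hn1]; [lra|].
  set (m := Nat.max n1 (2 * Z.to_nat (up (S0 + 1)))); set (n := del m).
  assert (Hn : Rabs s0 <= INR n).
  { assert (INR n1 <= INR n) by (apply le_INR; unfold n; specialize (Hdel m); unfold m in *; lia).
    lra. }
  destruct (chord_passes_near n (s0 := s0)) as [t [Ht Dt]]; [split_Rabs; lra|].
  destruct (Htau n) as [Htn Hdn].
  assert (Hts : Rabs (t - tau n) <= S0).
  { rewrite <- (chord_dist Ht Htn).
    pose proof (dist_tri (p n t) (c s0) (p n (tau n))).
    pose proof (dist_tri (c s0) (c 0) (p n (tau n))).
    rewrite (dist_sym (c 0) (p n (tau n))) in *; unfold S0; lra. }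
  set (j := Int_part (t - tau n)); pose proof (Int_part_bounds (t - tau n)) as Hj; fold j in Hj.
  assert (Hjm : (index_of_z j <= m)%nat).
  { pose proof (index_of_z_le j).
    assert (Z.abs j < up (S0 + 1))%Z.
    { apply lt_IZR; rewrite abs_IZR; pose proof (archimed (S0 + 1)); split_Rabs; lra. }
    unfold m; lia. }
  pose proof (Hy j Hjm) as Yj; fold n in Yj.
  assert (Hpt : d (chord_point n j) (p n t) <= 1).
  { unfold chord_point; rewrite chord_dist by (try apply clamp_in; lra).
    pose proof (clamp_dist (tau n + IZR j) Ht); split_Rabs; lra. }
  exists j; pose proof (Rinv_INR_S_le_1 m).
  pose proof (dist_tri (y j) (chord_point n j) (c s0)).
  pose proof (dist_tri (chord_point n j) (p n t) (c s0)); lra.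
Qed.

End LimitLine.

Lemma limit_isometric_sequence (Hp : proper_space d) (Hg : geodesic_space d) c lam0 eps0 N :
  1 <= lam0 -> 0 <= eps0 -> quasi_geodesic_on d lam0 eps0 line_dom c ->
  N_morse d N line_dom c -> morse_gauge N ->
  exists (y : Z -> X) K1 K2,
    (forall j k, d (y j) (y k) = Rabs (IZR j - IZR k)) /\
    (forall j, (0 <= j)%Z -> exists s, 0 <= s /\ d (y j) (c s) <= K1) /\
    (forall j, (j <= 0)%Z -> exists s, s <= 0 /\ d (y j) (c s) <= K1) /\
    (forall s, exists j, d (y j) (c s) <= K2).
Proof.
  intros Hlam0 Heps0 Hc HN Hgauge.
  assert (Hchords : forall n : nat, exists q : R -> X,
             geodesic_on d (fun t => 0 <= t <= chord_length c n) q /\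
             q 0 = c (- INR n) /\ q (chord_length c n) = c (INR n)) by (intro; apply Hg).
  destruct (choice _ Hchords) as [p Hchord].
  assert (Hcentre : forall n, exists t, 0 <= t <= chord_length c n /\
             d (p n t) (c 0) <= between_bound lam0 eps0 (N 1 0) 1).
  { intro n; apply (chord_passes_near Hlam0 Hc HN Hgauge p Hchord); pose proof (pos_INR n); lra. }
  destruct (choice _ Hcentre) as [tau Htau].
  destruct (diagonal_subsequence Hp (fun n k => chord_point c p tau n (z_of_index k)) _
     (fun n k => chord_point_bound N p Hchord tau Htau n (z_of_index k)))
    as [y [del [Hdel Hy]]].
  assert (Hy' : forall j m, (index_of_z j <= m)%nat ->
             d (y (index_of_z j)) (chord_point c p tau (del m) j) < / INR (S m)).
  { intros j m Hjm; rewrite <- (index_of_zK j) at 2; exact (Hy _ m Hjm). }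
  eexists; do 2 eexists; split; [|split; [|split]].
  - exact (limit_dist N Hlam0 Hc p Hchord tau Htau _ del Hdel Hy').
  - exact (limit_near_pos Hlam0 Heps0 Hc HN p Hchord tau Htau _ del Hdel Hy').
  - exact (limit_near_neg Hlam0 Heps0 Hc HN p Hchord tau Htau _ del Hdel Hy').
  - exact (line_near_limit Hlam0 Hc HN Hgauge p Hchord tau Htau _ del Hdel Hy').
Qed.

Lemma limit_geodesic (Hp : proper_space d) (Hg : geodesic_space d) c lam0 eps0 N :
  1 <= lam0 -> 0 <= eps0 -> quasi_geodesic_on d lam0 eps0 line_dom c ->
  N_morse d N line_dom c -> morse_gauge N ->
  exists gam, geodesic_on d line_dom gam /\
    finite_hausdorff d ray_dom (pos_end gam) ray_dom c /\
    finite_hausdorff d ray_dom (neg_end gam) ray_dom (neg_end c).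
Proof.
  intros Hlam0 Heps0 Hc HN Hgauge.
  destruct (limit_isometric_sequence Hp Hg Hlam0 Heps0 Hc HN Hgauge)
    as (y & K1 & K2 & Hiso & Hpos & Hneg & Hall).
  destruct (geodesic_through_points Hg y Hiso) as [gam [Hgeo Hint]].
  assert (Hpos' : forall t, 0 <= t -> exists s, 0 <= s /\ d (gam t) (c s) <= K1 + 1).
  { intros t Ht; pose proof (Int_part_bounds t).
    assert (Hnat : (-1 < Int_part t)%Z) by (apply lt_IZR; lra).
    destruct (Hpos (Int_part t)) as [s [Hs Ds]]; [lia|].
    exists s; split; auto; rewrite <- Hint in Ds.
    pose proof (geodesic_near_Int_part t Hgeo).
    pose proof (dist_tri (gam t) (gam (IZR (Int_part t))) (c s)); lra. }
  assert (Hneg' : forall t, t <= 0 -> exists s, s <= 0 /\ d (gam t) (c s) <= K1 + 1).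
  { intros t Ht; pose proof (Int_part_bounds t).
    destruct (Hneg (Int_part t)) as [s [Hs Ds]]; [apply le_IZR; lra|].
    exists s; split; auto; rewrite <- Hint in Ds.
    pose proof (geodesic_near_Int_part t Hgeo).
    pose proof (dist_tri (gam t) (gam (IZR (Int_part t))) (c s)); lra. }
  assert (Hall' : forall s, exists t, d (gam t) (c s) <= K2).
  { intro s; destruct (Hall s) as [j Hj]; exists (IZR j); rewrite Hint; exact Hj. }
  exists gam; split; [exact Hgeo | split].
  - exact (ray_close_of_sided Hlam0 Hc gam Hpos' Hneg' Hall').
  - apply (@ray_close_of_sided _ _ _ Hlam0 (quasi_geodesic_reverse Hc) (neg_end gam) (K1 + 1) K2);
      unfold neg_end.
    + intros t Ht; destruct (Hneg' (- t)) as [s [Hs Ds]]; [lra|].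
      exists (- s); rewrite Ropp_involutive; split; [lra | exact Ds].
    + intros t Ht; destruct (Hpos' (- t)) as [s [Hs Ds]]; [lra|].
      exists (- s); rewrite Ropp_involutive; split; [lra | exact Ds].
    + intro s; destruct (Hall' (- s)) as [t Ht]; exists (- t); rewrite Ropp_involutive; exact Ht.
Qed.

Lemma morse_isometry_axis g x0 : morse_isometry d g x0 ->
  exists c lam eps N L, 1 <= lam /\ 0 <= eps /\ quasi_geodesic_on d lam eps line_dom c /\
    morse_gauge N /\ N_morse d N line_dom c /\ forall s, d (g (c s)) (c (s + L)) <= 2 * L.
Proof.
  intros [[Hiso _] [x [_ [Hxs HL]]]]; cbv zeta in HL; set (L := d x0 (g x0)) in *.
  destruct HL as (HL & N & Hgauge & c & Hseg & [lam [eps (Hlam & Heps & Hc)]] & HN).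
  exists c, lam, eps, N, L; do 5 (split; auto).
  intro s; set (i := Int_part (s / L)); pose proof (Int_part_bounds (s / L)) as Hi; fold i in Hi.
  set (u := s - IZR i * L).
  assert (Hu : 0 <= u <= L).
  { destruct Hi as [Hi1 Hi2].
    apply (Rmult_le_compat_r L) in Hi1; [|lra]; apply (Rmult_lt_compat_r L) in Hi2; [|lra].
    replace (s / L * L) with s in * by (field; lra); unfold u; lra. }
  destruct (Hseg i) as [Gi [Ei _]]; destruct (Hseg (i + 1)%Z) as [Gi1 [Ei1 _]].
  assert (D1 : d (c s) (x i) = u).
  { rewrite <- Ei; pose proof (Gi u 0 Hu ltac:(lra)) as G; cbv beta in G.
    replace (IZR i * L + u) with s in G by (unfold u; ring); rewrite Rplus_0_r in G.
    rewrite G; split_Rabs; lra. }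
  assert (D2 : d (x (i + 1)%Z) (c (s + L)) = u).
  { rewrite <- Ei1; pose proof (Gi1 0 u ltac:(lra) Hu) as G; cbv beta in G.
    replace (IZR (i + 1) * L + u) with (s + L) in G by (unfold u; rewrite plus_IZR; ring).
    rewrite Rplus_0_r in G; rewrite G; split_Rabs; lra. }
  rewrite <- (Hiso (c s) (x i)), <- Hxs in D1.
  pose proof (dist_tri (g (c s)) (x (i + 1)%Z) (c (s + L))); lra.
Qed.

Lemma shift_finite_hausdorff_ray (g : X -> X) c lam eps L K : 1 <= lam ->
  quasi_geodesic_on d lam eps line_dom c -> (forall s, d (g (c s)) (c (s + L)) <= K) ->
  finite_hausdorff d ray_dom (fun t => g (c t)) ray_dom c.
Proof.
  intros Hlam Hc Hshift.
  assert (Heps : 0 <= eps)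
    by (destruct (Hc 0 0 I I) as [_ H]; rewrite dist_xx, Rminus_diag, Rabs_R0 in H; lra).
  assert (Hlam_pos : 0 <= lam) by lra.
  assert (HlamL : 0 <= lam * Rabs L) by (apply Rmult_le_pos; [lra | apply Rabs_pos]).
  assert (Hnear : forall s t, Rabs (s - t) <= Rabs L -> d (c s) (c t) <= lam * Rabs L + eps)
    by (intros s t Hst; apply (quasi_geodesic_upper_le s t Hlam_pos Hc I I Hst)).
  exists (K + (lam * Rabs L + eps)); unfold ray_dom; split.
  - intros s Hs; destruct (Rle_dec 0 (s + L)).
    + exists (s + L); split; auto; pose proof (Hshift s); lra.
    + exists 0; split; [lra|].
      pose proof (Hnear (s + L) 0 ltac:(split_Rabs; lra)); pose proof (Hshift s).
      pose proof (dist_tri (g (c s)) (c (s + L)) (c 0)); lra.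
  - intros t Ht; destruct (Rle_dec 0 (t - L)).
    + exists (t - L); split; auto; pose proof (Hshift (t - L)).
      replace (t - L + L) with t in * by ring; lra.
    + exists 0; split; [lra|].
      pose proof (Hnear L t ltac:(split_Rabs; lra)); pose proof (Hshift 0).
      rewrite Rplus_0_l in *; pose proof (dist_tri (g (c 0)) (c L) (c t)); lra.
Qed.

Lemma isometry_fixes_close_ray (g : X -> X) a b : (forall x y, d (g x) (g y) = d x y) ->
  finite_hausdorff d ray_dom a ray_dom b ->
  finite_hausdorff d ray_dom (fun t => g (b t)) ray_dom b ->
  same_boundary_point d (fun t => g (a t)) a.
Proof.
  intros Hiso Hab Hgb; unfold same_boundary_point.
  eapply finite_hausdorff_trans; [exact (finite_hausdorff_map g Hiso Hab)|].
  eapply finite_hausdorff_trans; [exact Hgb | exact (finite_hausdorff_sym Hab)].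
Qed.

End Metric.

Theorem lemma4p5 (X : Type) (d : X -> X -> R)
  (Hmetric : is_metric d) (Hproper : proper_space d)
  (Hgeod : geodesic_space d) (x0 : X) (g : X -> X)
  (Hg : morse_isometry d g x0) :
  exists gamma : R -> X,
    geodesic_on d line_dom gamma /\ is_morse d line_dom gamma /\
    morse_geodesic_ray d (pos_end gamma) /\
    morse_geodesic_ray d (neg_end gamma) /\
    ~ same_boundary_point d (pos_end gamma) (neg_end gamma) /\
    same_boundary_point d (fun t => g (pos_end gamma t)) (pos_end gamma) /\
    same_boundary_point d (fun t => g (neg_end gamma t)) (neg_end gamma).
Proof.
  pose proof (proj1 (proj1 Hg)) as Hiso.
  destruct (morse_isometry_axis Hmetric Hg)
    as (c & lam & eps & N & L & Hlam & Heps & Hc & Hgauge & HN & Hshift).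
  destruct (limit_geodesic Hmetric Hproper Hgeod Hlam Heps Hc HN Hgauge)
    as (gam & Hgeo & Hpos & Hneg).
  assert (Hmorse : is_morse d line_dom gam)
    by exact (morse_of_finite_hausdorff Hmetric (finite_hausdorff_of_ends Hpos Hneg)
                Hgauge HN).
  destruct (morse_line_rays Hmetric Hgeo Hmorse) as [Hray_pos Hray_neg].
  assert (Hshift_neg : forall s, d (g (neg_end c s)) (neg_end c (s + - L)) <= 2 * L).
  { intro s; unfold neg_end; replace (- (s + - L)) with (- s + L) by ring; apply Hshift. }
  exists gam; refine (conj Hgeo (conj Hmorse (conj Hray_pos (conj Hray_neg (conj _ (conj _ _)))))).
  - exact (geodesic_ends_distinct Hgeo).
  - exact (isometry_fixes_close_ray Hmetric g Hiso Hpos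
             (shift_finite_hausdorff_ray Hmetric g L Hlam Hc Hshift)).
  - exact (isometry_fixes_close_ray Hmetric g Hiso Hneg
             (shift_finite_hausdorff_ray Hmetric g (- L) Hlam (quasi_geodesic_reverse Hc)
                Hshift_neg)).
Qed.
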